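(* Let $Q=A_2\otimes E_8$ and $R=\sqrt3E_8$, and write $O(Q)=X\times Y$ with $X\cong Sym_3$ and $Y\cong O(E_8)$ as below. Let $L$ be an overlattice of $Q\perp R$ (contained in $\mathbb Q\otimes(Q\perp R)$) such that $L\cap\mathbb QQ=Q$, $L\cap\mathbb QR=R$, and $L$ is stable under $O_3(O(Q))$. Then $\mathrm{Stab}_{X\times Z(Y)}(L)\cong Sym_3$, and $C_{X\times Y}(\mathrm{Stab}_{X\times Z(Y)}(L))=Y$, the subgroup of $X\times Y$ fixing each of the three sets $\alpha\otimes\Psi$.
   Context: $A_2\otimes E_8$ is the tensor product lattice; $\sqrt3E_8$ is $E_8$ with form scaled by 3. With $\Psi$ the roots of $E_8$, the minimal (norm 4) vectors of $Q$ form three sets $\alpha\otimes\Psi$, $\alpha$ running over three pairwise nonproportional roots of $A_2$; $O(Q)=X\times Y$ where $X\cong Sym_3$ permutes these three sets (acting as $\alpha_i\otimes x\mapsto\alpha_{p(i)}\otimes x$ for roots $\alpha_1+\alpha_2+\alpha_3=0$) and $Y\cong O(E_8)$ fixes each set. Elements of $O(Q)$ act on $\mathbb Q\otimes(Q\perp R)$ by acting trivially on $R$. $O_3(O(Q))$ is the largest normal $3$-subgroup of $O(Q)$ and $Z(Y)$ is the center of $Y$; $\mathrm{Stab}$ and $C$ denote stabilizer and centralizer. *)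

From mathcomp Require Import all_boot all_order all_algebra all_fingroup.
Set Implicit Arguments. Unset Strict Implicit. Unset Printing Implicit Defensive.
Import GRing.Theory Num.Theory.
Local Open Scope ring_scope.

(* ---------- Coordinates ----------------------------------------------------
   E8 is Z^8 with Gram matrix E8gram (Cartan matrix of E8, Bourbaki numbering,
   0-indexed: edges 0-2, 2-3, 3-4, 4-5, 5-6, 6-7, 1-3).
   A2 has basis alpha_1, alpha_2 (simple roots); alpha_3 = -alpha_1-alpha_2,
   so alpha_1 + alpha_2 + alpha_3 = 0.
   A vector of Q(x)(Q _|_ R) is a pair (M, r) with M : 'M[rat]_(2,8) and
   r : 'rV[rat]_8, meaning  sum_{i,j} M i j alpha_i (x) b_j  (+)  sum_j r j b'_j
   where b_j is the basis of E8 and b'_j = sqrt3 b_j the basis of R = sqrt3 E8.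
   Q = A2 (x) E8 is the set of integral M, R the set of integral r. *)

Definition e8adj (i j : nat) : bool :=
  [|| (i == 0%N) && (j == 2%N), (i == 2%N) && (j == 3%N), (i == 3%N) && (j == 4%N),
      (i == 4%N) && (j == 5%N), (i == 5%N) && (j == 6%N), (i == 6%N) && (j == 7%N)
    | (i == 1%N) && (j == 3%N)].

Definition E8gram : 'M[rat]_8 :=
  \matrix_(i < 8, j < 8)
    (if i == j then 2 else if e8adj i j || e8adj j i then -1 else 0).

Definition intmx (m n : nat) (A : 'M[rat]_(m, n)) : Prop :=
  forall i j, exists z : int, A i j = z%:~R.

(* O(E8): integral matrices g (acting on row coordinate vectors x |-> x g)
   preserving the E8 form. *)
Definition OE8 (g : 'M[rat]_8) : Prop :=
  intmx g /\ g *m E8gram *m g^T = E8gram.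

Definition ZE8 (g : 'M[rat]_8) : Prop :=
  OE8 g /\ forall h, OE8 h -> g *m h = h *m g.

Definition alpha (k : 'I_3) : 'rV[rat]_2 :=
  if val k == 0%N then \row_(j < 2) (if val j == 0%N then 1 else 0)
  else if val k == 1%N then \row_(j < 2) (if val j == 1%N then 1 else 0)
  else \row_(j < 2) (-1).

(* the linear map alpha_i |-> alpha_{p(i)} on Q(x)A2, in row coordinates *)
Definition Xmat (p : 'S_3) : 'M[rat]_2 :=
  \matrix_(i < 2, j < 2) alpha (p (widen_ord (isT : 2 <= 3)%N i)) 0 j.

Definition V := ('M[rat]_(2, 8) * 'rV[rat]_8)%type.

Definition vsub (u w : V) : V := (u.1 - w.1, u.2 - w.2).
Definition vscale (n : nat) (u : V) : V := (n%:R *: u.1, n%:R *: u.2).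

Definition inQR (v : V) : Prop := intmx v.1 /\ intmx v.2.

Definition overlattice (L : V -> Prop) : Prop :=
  [/\ forall u w, L u -> L w -> L (vsub u w),
      forall v, inQR v -> L v &
      exists2 N : nat, (0 < N)%N & forall v, L v -> inQR (vscale N v)].

(* ---------- The group O(Q) = X x Y --------------------------------------------
   An element is a pair (p, g), p in Sym_3 (the X-component), g in O(E8)
   (the Y-component); X x Y is the direct product. It acts on Q(x)(Q _|_ R) by
   alpha_i (x) x |-> alpha_{p(i)} (x) x g on Q, trivially on R. *)
Definition G := ('S_3 * 'M[rat]_8)%type.

Definition mulG (x y : G) : G := ((x.1 * y.1)%g, x.2 *m y.2).
Definition oneG : G := (1%g, 1%:M).

(* (right) action: act (mulG x y) = act y \o act x *)
Definition act (x : G) (v : V) : V := ((Xmat x.1)^T *m v.1 *m x.2, v.2).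

Definition inXY (x : G) : Prop := OE8 x.2.
Definition inXZY (x : G) : Prop := ZE8 x.2.
Definition inY (x : G) : Prop := x.1 = 1%g /\ OE8 x.2.

Definition normal3sub (N : G -> Prop) : Prop :=
  [/\ forall x, N x -> inXY x,
      N oneG,
      forall x y, N x -> N y -> N (mulG x y),
      forall g n, inXY g -> N n -> exists2 n', N n' & mulG g n = mulG n' g &
      exists s : seq G, exists k : nat,
        [/\ uniq s, size s = (3 ^ k)%N & forall x, N x <-> x \in s]].

Definition stabilizes (L : V -> Prop) (x : G) : Prop :=
  forall v, L v <-> L (act x v).

Definition StabXZY (L : V -> Prop) (x : G) : Prop := inXZY x /\ stabilizes L x.

Definition isoSym3 (S : G -> Prop) : Prop :=
  exists f : 'S_3 -> G,
    [/\ injective f,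
        forall p q, f (p * q)%g = mulG (f p) (f q) &
        forall x, S x <-> exists p, x = f p].

Definition centXY (S : G -> Prop) (x : G) : Prop :=
  inXY x /\ forall s, S s -> mulG x s = mulG s x.

(* For (M, r) in L and an even permutation c, stability under the normal
   3-subgroup A_3 x 1 and L meeting QQ in Q make c(M) - M lie in Q.  For the
   3-cycle this gives 3M in Q and shows that the transposition acts on M as -1
   modulo Q, so every (p, sgn p) stabilizes L.  The centre of O(E8) is {1, -1},
   since it commutes with the simple reflections; an element of X x Z(Y) not of
   that form would give (1, -1) in the stabilizer, forcing 2M, hence M, into Q
   and then L into Q _|_ R.  The stabilizer is thus a twisted diagonal copy of
   Sym_3, whose centralizer is Y because Sym_3 has trivial centre. *)

From Pilot Require Import Defs.
From mathcomp Require Import all_boot all_order all_algebra all_fingroup all_solvable.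
From mathcomp Require Import lra.

Set Implicit Arguments. Unset Strict Implicit. Unset Printing Implicit Defensive.
Import GRing.Theory Num.Theory.
Local Open Scope ring_scope.

Lemma intmxP m n (A : 'M[rat]_(m, n)) :
  intmx A <-> forall i j, A i j \is a Num.int.
Proof.
split=> H i j; first by have [z ->] := H i j; exact: intr_int.
by apply/intrP; apply: H.
Qed.

Lemma intmx1 n : intmx (1%:M : 'M[rat]_n).
Proof. by apply/intmxP=> i j; rewrite mxE rpredMn. Qed.

Lemma intmxD m n (A B : 'M[rat]_(m, n)) : intmx A -> intmx B -> intmx (A + B).
Proof. by move=> /intmxP HA /intmxP HB; apply/intmxP=> i j; rewrite mxE rpredD. Qed.

Lemma intmxN m n (A : 'M[rat]_(m, n)) : intmx A -> intmx (- A).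
Proof. by move=> /intmxP HA; apply/intmxP=> i j; rewrite mxE rpredN. Qed.

Lemma intmxB m n (A B : 'M[rat]_(m, n)) : intmx A -> intmx B -> intmx (A - B).
Proof. by move=> HA HB; apply: intmxD HA (intmxN HB). Qed.

Lemma intmxM m n p (A : 'M[rat]_(m, n)) (B : 'M[rat]_(n, p)) :
  intmx A -> intmx B -> intmx (A *m B).
Proof.
move=> /intmxP HA /intmxP HB; apply/intmxP=> i j; rewrite mxE.
by apply: rpred_sum => k _; rewrite rpredM.
Qed.

Definition O0 : 'I_3 := @Ordinal 3 0 isT.
Definition O1 : 'I_3 := @Ordinal 3 1 isT.
Definition O2 : 'I_3 := @Ordinal 3 2 isT.

Lemma ord3P (m : 'I_3) : [\/ m = O0, m = O1 | m = O2].
Proof.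
by case: m => [[|[|[|]]] Hm] //; [constructor 1|constructor 2|constructor 3];
  apply: val_inj.
Qed.

Lemma alphaE (m : 'I_3) j : alpha m 0 j =
  if val m == 0%N then (val j == 0%N)%:R
  else if val m == 1%N then (val j == 1%N)%:R else -1.
Proof.
by rewrite /alpha; case: ifP => _; [|case: ifP => _]; rewrite mxE //; case: ifP.
Qed.

Lemma sum_alpha_perm (q : 'S_3) j :
  alpha (q O0) 0 j + alpha (q O1) 0 j + alpha (q O2) 0 j = 0.
Proof.
have : \sum_(m < 3) alpha (q m) 0 j = \sum_(m < 3) alpha m 0 j.
  by rewrite (reindex_inj (@perm_inj _ q^-1)); apply: eq_bigr => m _; rewrite permKV.
rewrite !big_ord_recl big_ord0 !addr0 addrA.
have [-> -> ->] : [/\ O0 = ord0, O1 = lift ord0 ord0 & O2 = lift ord0 (lift ord0 ord0)].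
  by split; apply: val_inj.
move=> ->; rewrite big_ord0 addr0 !alphaE /=.
by case: j => [[|[|//]]] _ /=; lra.
Qed.

Lemma alpha_linear (f : 'I_3 -> rat) (m : 'I_3) : f O0 + f O1 + f O2 = 0 ->
  alpha m 0 0 * f O0 + alpha m 0 1 * f O1 = f m.
Proof.
move=> f_sum0; case: (ord3P m) => ->; rewrite !alphaE /= ?mul1r ?mul0r ?addr0 ?add0r //.
by rewrite !mulN1r; lra.
Qed.

Lemma XmatM (p q : 'S_3) : Xmat (p * q)%g = Xmat p *m Xmat q.
Proof.
apply/matrixP=> i j; rewrite !mxE permM.
rewrite -(@alpha_linear (fun m => alpha (q m) 0 j) _ (sum_alpha_perm q j)).
rewrite !big_ord_recl big_ord0 addr0 !mxE.
by congr (alpha _ 0 _ * alpha (q _) _ _ + alpha _ 0 _ * alpha (q _) _ _);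
  apply: val_inj.
Qed.

Lemma Xmat1 : Xmat 1%g = 1%:M.
Proof.
apply/matrixP=> i j; rewrite !mxE perm1 alphaE /=.
by case: i => [[|[|]]] Hi //; case: j => [[|[|]]] Hj.
Qed.

Lemma trXmat_mulE p (M : 'M[rat]_(2, 8)) k j :
  ((Xmat p)^T *m M) k j = alpha (p O0) 0 k * M 0 j + alpha (p O1) 0 k * M 1 j.
Proof.
rewrite mxE !big_ord_recl big_ord0 addr0 !mxE.
by congr (alpha (p _) _ _ * M _ _ + alpha (p _) _ _ * M _ _); apply: val_inj.
Qed.

Lemma ord2P (i : 'I_2) : i = 0 \/ i = 1.
Proof. by case: i => [[|[|//]]] Hi; [left|right]; apply: val_inj. Qed.

Definition transp01 : 'S_3 := tperm O0 O1.
Definition cycle012 : 'S_3 := (tperm O0 O1 * tperm O0 O2)%g.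

Lemma odd_transp01 : odd_perm transp01. Proof. by rewrite odd_tperm. Qed.
Lemma odd_cycle012 : odd_perm cycle012 = false.
Proof. by rewrite odd_permM !odd_tperm. Qed.

Lemma transp01_involutive : (transp01 * transp01 = 1)%g.
Proof. exact: tperm2. Qed.

(* Writing [M] as [alpha_1 (x) m_0 + alpha_2 (x) m_1], the 3-cycle moves it by
   [alpha_1 (x) a + alpha_2 (x) b] with [a = -m_0-m_1], [b = m_0-2m_1], so that
   [3 m_0 = b - 2a], [3 m_1 = -a-b], and the transposition maps [M] to [-M - a]. *)
Lemma cycle012_integral (M : 'M[rat]_(2, 8)) :
  intmx ((Xmat cycle012)^T *m M - M) ->
  intmx (3%:R *: M) /\ intmx ((Xmat transp01)^T *m M + M).
Proof.
move=> /intmxP H.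
pose a j := - M 0 j - M 1 j; pose b j := M 0 j - 2%:R * M 1 j.
have [c0 c1] : cycle012 O0 = O1 /\ cycle012 O1 = O2.
  by rewrite !permM tpermL tpermD // tpermR tpermL.
have a_int j : a j \is a Num.int.
  suff -> : a j = ((Xmat cycle012)^T *m M - M) 0 j by apply: H.
  by rewrite mxE trXmat_mulE mxE c0 c1 !alphaE /= /a; lra.
have b_int j : b j \is a Num.int.
  suff -> : b j = ((Xmat cycle012)^T *m M - M) 1 j by apply: H.
  by rewrite mxE trXmat_mulE mxE c0 c1 !alphaE /= /b; lra.
split; apply/intmxP => i j.
- rewrite mxE; case: (ord2P i) => ->.
  + suff -> : 3%:R * M 0 j = b j - a j *+ 2 by rewrite rpredB ?rpredMn.
    by rewrite /a /b; lra.
  + suff -> : 3%:R * M 1 j = - a j - b j by rewrite rpredB ?rpredN.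
    by rewrite /a /b; lra.
- rewrite mxE trXmat_mulE tpermL tpermR !alphaE /=.
  have sum_int : M 0 j + M 1 j \is a Num.int.
    by have := a_int j; rewrite /a -opprD rpredN.
  by case: (ord2P i) => -> /=; rewrite !(mul0r, mul1r, add0r, addr0) // addrC.
Qed.

Lemma act_mul x y v : Defs.act (mulG x y) v = Defs.act y (Defs.act x v).
Proof.
case: x y v => [p g] [q h] [M r].
by rewrite /Defs.act /mulG /= XmatM trmx_mul !mulmxA.
Qed.

Lemma stabilizes_mul L x y :
  stabilizes L x -> stabilizes L y -> stabilizes L (mulG x y).
Proof. by move=> Hx Hy v; rewrite act_mul (Hx v) (Hy (Defs.act x v)). Qed.

Lemma stabilizes_involution (L : V -> Prop) x :
  (forall v, Defs.act x (Defs.act x v) = v) ->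
  (forall v, L v -> L (Defs.act x v)) -> stabilizes L x.
Proof. by move=> xx Lx v; split=> [|/Lx]; [apply: Lx | rewrite xx]. Qed.

Definition sgn_twist (p : 'S_3) : G := (p, ((-1) ^+ p)%:M).

Lemma sgn_twistM p q : mulG (sgn_twist p) (sgn_twist q) = sgn_twist (p * q)%g.
Proof. by rewrite /mulG /sgn_twist /= odd_permM signr_addb scalar_mxM. Qed.

Definition alt_x1 (x : G) : Prop := x.2 = 1%:M /\ ~~ odd_perm x.1.

Lemma card_alt3 : #|[pred p : 'S_3 | ~~ odd_perm p]| = 3%N.
Proof.
rewrite (eq_card (B := Alt 'I_3)) => [|p]; last by rewrite Alt_even inE.
have := card_Alt (_ : 1 < #|'I_3|)%N; rewrite card_ord => /(_ isT).
by rewrite (_ : 3`! = 2 * 3)%N // => /eqP; rewrite eqn_pmul2l // => /eqP.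
Qed.

Lemma OE8_1 : OE8 1%:M.
Proof. by split; [apply: intmx1 | rewrite trmx1 mul1mx mulmx1]. Qed.

Lemma normal3sub_alt_x1 : normal3sub alt_x1.
Proof.
split.
- by move=> [p g] [/= -> _]; apply: OE8_1.
- by split => //=; rewrite odd_perm1.
- move=> [p g] [q h] [/= -> Hp] [/= -> Hq]; split; rewrite /= ?mulmx1 //.
  by rewrite odd_permM (negbTE Hp) (negbTE Hq).
- move=> [p g] [q h] _ [/= -> Hq].
  exists ((p * q * p^-1)%g, 1%:M).
    by split => //=; rewrite !odd_permM odd_permV (negbTE Hq) addbC addbA addbb.
  by rewrite /mulG /= mulmx1 mul1mx -mulgA mulVg mulg1.
- exists [seq (p, 1%:M) | p <- enum [pred p : 'S_3 | ~~ odd_perm p]], 1%N; split.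
  + by rewrite map_inj_uniq ?enum_uniq // => p q [].
  + by rewrite size_map -cardE card_alt3.
  + move=> [p g]; split.
    * by move=> [/= -> Hp]; apply/mapP; exists p => //; rewrite mem_enum.
    * by move/mapP=> [q]; rewrite mem_enum => Hq [-> ->].
Qed.

Lemma E8gram_tr : E8gram^T = E8gram.
Proof. by apply/matrixP => a b; rewrite !mxE eq_sym orbC. Qed.

Lemma E8gram_diag i : E8gram i i = 2.
Proof. by rewrite mxE eqxx. Qed.

Lemma intmx_E8gram : intmx E8gram.
Proof.
apply/intmxP => a b; rewrite mxE.
by case: ifP => _; [|case: ifP => _]; rewrite ?rpredN ?rpred0 ?rpred1 ?rpred_nat.
Qed.

Lemma intmx_delta n (i j : 'I_n) : intmx (delta_mx i j : 'M[rat]_n).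
Proof. by apply/intmxP => a b; rewrite mxE; case: (_ && _). Qed.

Lemma mulmx_deltaE m n p (B : 'M[rat]_(m, n)) (i : 'I_n) (j : 'I_p) a b :
  (B *m delta_mx i j) a b = B a i * (b == j)%:R.
Proof.
rewrite mxE (bigD1 i) //= big1 ?addr0; first by rewrite mxE eqxx.
by move=> k /negbTE Hk; rewrite mxE Hk mulr0.
Qed.

Lemma mulmx_delta_mulE m n p q (B : 'M[rat]_(m, n)) (i : 'I_n) (j : 'I_p)
  (C : 'M[rat]_(p, q)) a b :
  (B *m delta_mx i j *m C) a b = B a i * C j b.
Proof.
rewrite mxE (bigD1 j) //= big1 ?addr0; first by rewrite mulmx_deltaE eqxx mulr1.
by move=> k /negbTE Hk; rewrite mulmx_deltaE Hk mulr0 mul0r.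
Qed.

(* Reflection in the [i]-th simple root [b_i]: [x |-> x - (x, b_i) b_i]. *)
Definition refl (i : 'I_8) : 'M[rat]_8 := 1%:M - E8gram *m delta_mx i i.

Lemma OE8_refl i : OE8 (refl i).
Proof.
split; first exact: intmxB (@intmx1 8) (intmxM intmx_E8gram (intmx_delta i i)).
have dEd : delta_mx i i *m E8gram *m delta_mx i i = 2%:R *: delta_mx i i.
  apply/matrixP => a b; rewrite mulmx_deltaE !mxE (bigD1 i) //= big1 ?addr0.
    rewrite !mxE eqxx andbT.
    by case: (a == i); case: (b == i); rewrite /= ?mulr0 ?mul0r ?mulr1 ?mul1r.
  by move=> k /negbTE ki; rewrite mxE ki andbF mul0r.
rewrite /refl linearB /= trmx1 trmx_mul trmx_delta E8gram_tr.
rewrite mulmxBl mul1mx mulmxBl !mulmxBr !mulmx1 !mulmxA.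
rewrite -(mulmxA _ (delta_mx i i)) -(mulmxA _ _ (delta_mx i i)) dEd.
rewrite -scalemxAr -scalemxAl -!mulmxA.
set P := E8gram *m (delta_mx i i *m E8gram).
by apply/matrixP => a b; rewrite !mxE; set x := P a b; lra.
Qed.

Lemma commute_refl_entry (g : 'M[rat]_8) i a k :
  g *m refl i = refl i *m g ->
  (g *m E8gram) a i * (k == i)%:R = E8gram a i * g i k.
Proof.
rewrite /refl mulmxBr mulmx1 mulmxBl mul1mx => /addrI/oppr_inj gE.
have := congr1 (fun A : 'M_8 => A a k) gE.
by rewrite /= mulmx_delta_mulE mulmxA mulmx_deltaE => ->.
Qed.

(* The Dynkin diagram of E8 is connected, so all diagonal entries agree. *)
Lemma commute_refl_scalar (g : 'M[rat]_8) :
  (forall i, g *m refl i = refl i *m g) -> g = (g 0 0)%:M.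
Proof.
move=> g_refl; have R i a k := commute_refl_entry a k (g_refl i).
have g_offdiag i k : k != i -> g i k = 0.
  move=> /negbTE ki; have := R i i k; rewrite ki mulr0 E8gram_diag => /esym/eqP.
  by rewrite mulf_eq0 => /orP [/eqP //|/eqP].
have gE a i : (g *m E8gram) a i = g a a * E8gram a i.
  rewrite mxE (bigD1 a) //= big1 ?addr0 // => l la.
  by rewrite g_offdiag ?mul0r // eq_sym.
have g_adj a i : E8gram a i = -1 -> g a a = g i i.
  by move=> Eai; have := R i a i; rewrite eqxx mulr1 gE Eai; lra.
pose o (n : nat) (H : (n < 8)%N) := @Ordinal 8 n H.
have e20 := g_adj (o 2 isT) (o 0 isT) ltac:(by rewrite mxE).
have e32 := g_adj (o 3 isT) (o 2 isT) ltac:(by rewrite mxE).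
have e43 := g_adj (o 4 isT) (o 3 isT) ltac:(by rewrite mxE).
have e54 := g_adj (o 5 isT) (o 4 isT) ltac:(by rewrite mxE).
have e65 := g_adj (o 6 isT) (o 5 isT) ltac:(by rewrite mxE).
have e76 := g_adj (o 7 isT) (o 6 isT) ltac:(by rewrite mxE).
have e13 := g_adj (o 1 isT) (o 3 isT) ltac:(by rewrite mxE).
have g_diag a : g a a = g 0 0.
  have -> : (0 : 'I_8) = o 0 isT by apply: val_inj.
  case: a => [[|[|[|[|[|[|[|[|]]]]]]]] Ha] //; rewrite (bool_irrelevance Ha isT);
  by rewrite ?e13 ?e76 ?e65 ?e54 ?e43 ?e32 ?e20.
apply/matrixP => a b; rewrite mxE; case: eqP => [<-|/eqP ab]; first by rewrite g_diag.
by rewrite g_offdiag // eq_sym.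
Qed.

Lemma OE8_scalar (l : rat) : OE8 l%:M -> l = 1 \/ l = -1.
Proof.
case=> _; rewrite tr_scalar_mx mul_mx_scalar mul_scalar_mx scalerA.
move=> /matrixP /(_ 0 0); rewrite mxE E8gram_diag => l2.
have : l ^+ 2 == 1 by rewrite expr2; apply/eqP; lra.
by rewrite sqrf_eq1 => /orP [/eqP|/eqP]; [left|right].
Qed.

Lemma ZE8_sign (g : 'M[rat]_8) : ZE8 g -> g = 1%:M \/ g = - 1%:M.
Proof.
move=> [OE8g g_central].
have g_scalar := commute_refl_scalar (fun i => g_central _ (OE8_refl i)).
have [g00|g00] : g 0 0 = 1 \/ g 0 0 = -1 by apply: OE8_scalar; rewrite -g_scalar.
  by left; rewrite g_scalar g00.
by right; rewrite g_scalar g00 raddfN.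
Qed.

Lemma other_ord3 (x a : 'I_3) : exists2 b : 'I_3, b != x & b != a.
Proof.
by case: (ord3P x) => ->; case: (ord3P a) => ->;
  first [by exists O0 | by exists O1 | by exists O2].
Qed.

(* A central [q] commutes with every transposition [(x a)], so [q] permutes
   [{x, a}]; if [q x = a != x], then [q] fixes a third point [b], a contradiction. *)
Lemma central_perm3 (q : 'S_3) : (forall p, q * p = p * q)%g -> q = 1%g.
Proof.
move=> q_central.
have q_tperm x a : tperm x a (q x) = q a.
  have tpermJq : (tperm x a ^ q)%g = tperm x a by rewrite conjgE -q_central mulKg.
  by rewrite -{1}tpermJq tpermJ tpermL.
apply/permP => x; rewrite perm1; have [//|qx_neq_x] := eqVneq (q x) x.
have [b bx bqx] := other_ord3 x (q x).
have := q_tperm x b; rewrite tpermD ?[x == _]eq_sym // => /perm_inj bx_eq.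
by rewrite bx_eq eqxx in bx.
Qed.

Lemma ZE8_sgn (b : bool) : ZE8 ((-1) ^+ b)%:M.
Proof.
split=> [|h _]; last by rewrite scalar_mxC.
split; first by apply/intmxP => i j; rewrite mxE rpredMn // rpredX ?rpredN.
by rewrite tr_scalar_mx mul_mx_scalar mul_scalar_mx scalerA -expr2 sqrr_sign scale1r.
Qed.

Section Overlattice.

Variable L : V -> Prop.
Hypothesis L_overlattice : overlattice L.
Hypothesis L_Q : forall M : 'M[rat]_(2, 8), L (M, 0) <-> intmx M.
Hypothesis L_R : forall r : 'rV[rat]_8, L (0, r) <-> intmx r.
Hypothesis L_alt : forall c : 'S_3, ~~ odd_perm c -> stabilizes L (c, 1%:M).
Hypothesis L_not_QR : exists v, L v /\ ~ inQR v.

Lemma L_sub u w : L u -> L w -> L (vsub u w).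
Proof. case: L_overlattice => sub _ _; exact: sub. Qed.

Lemma L_alt_integral c M r :
  ~~ odd_perm c -> L (M, r) -> intmx ((Xmat c)^T *m M - M).
Proof.
move=> c_even LMr; apply/L_Q.
have := L_sub ((L_alt c_even _).1 LMr) LMr.
by rewrite /vsub /Defs.act /= mulmx1 subrr.
Qed.

Lemma stabilizes_transp01_sign : stabilizes L (transp01, - 1%:M).
Proof.
apply: stabilizes_involution => [[M r]|[M r] LMr].
  rewrite /Defs.act /= !mulmxN !mulmx1 opprK mulmxA -trmx_mul.
  by rewrite -XmatM transp01_involutive Xmat1 trmx1 mul1mx.
have [_ tM_int] := cycle012_integral (L_alt_integral (negbT odd_cycle012) LMr).
have := L_sub LMr ((L_Q _).2 tM_int).
by rewrite /vsub /Defs.act /= mulmxN mulmx1 subr0 [_ + M]addrC opprD addrA subrr add0r.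
Qed.

Lemma stabilizes_sgn_twist p : stabilizes L (sgn_twist p).
Proof.
case p_odd: (odd_perm p); last by rewrite /sgn_twist p_odd; apply: L_alt; rewrite p_odd.
have -> : sgn_twist p = mulG (transp01, - 1%:M) (transp01^-1 * p, 1%:M)%g.
  by rewrite /sgn_twist /mulG /= mulKVg p_odd mulmx1 expr1 raddfN.
apply: stabilizes_mul; first exact: stabilizes_transp01_sign.
by apply: L_alt; rewrite odd_permM odd_permV odd_transp01 p_odd.
Qed.

Lemma not_stabilizes_minus1 : ~ stabilizes L (1%g, - 1%:M).
Proof.
move: L_not_QR => [[M r] [LMr not_QR]] stab_minus1; apply: not_QR.
have L2M : L (M + M, 0).
  have := L_sub LMr ((stab_minus1 _).1 LMr).
  by rewrite /vsub /Defs.act /= Xmat1 trmx1 mul1mx mulmxN mulmx1 opprK subrr.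
have [M3_int _] := cycle012_integral (L_alt_integral (negbT odd_cycle012) LMr).
have M_int : intmx M.
  suff <- : 3%:R *: M - (M + M) = M by apply: intmxB M3_int ((L_Q _).1 L2M).
  by rewrite scaler_nat mulrSr mulr2n addrAC subrr add0r.
split=> //; apply/L_R.
have := L_sub LMr ((L_Q _).2 M_int).
by rewrite /vsub /= subrr subr0.
Qed.

Lemma StabXZY_sgn_twist x : StabXZY L x <-> exists p, x = sgn_twist p.
Proof.
split=> [[/ZE8_sign g_sign stab_x]|[p ->]]; last first.
  by split; [apply: ZE8_sgn | apply: stabilizes_sgn_twist].
case: x g_sign stab_x => p g /= g_sign stab_x; exists p.
have := stabilizes_mul stab_x (stabilizes_sgn_twist p^-1).
rewrite /mulG /sgn_twist /= mulgV odd_permV.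
have not_stab := not_stabilizes_minus1.
case: g_sign => ->; case: (odd_perm p) => /=;
  rewrite ?expr0 ?expr1 mul_mx_scalar ?scale1r ?scaleN1r ?opprK ?raddfN //.
Qed.

End Overlattice.

Theorem lemma5p3 (L : V -> Prop) :
  overlattice L ->
  (exists v, L v /\ ~ inQR v) ->
  (forall M : 'M[rat]_(2, 8), L (M, 0) <-> intmx M) ->
  (forall r : 'rV[rat]_8, L (0, r) <-> intmx r) ->
  (forall N, normal3sub N -> forall x, N x -> stabilizes L x) ->
  isoSym3 (StabXZY L) /\ (forall x, centXY (StabXZY L) x <-> inY x).
Proof.
move=> L_overlattice L_not_QR L_Q L_R L_O3.
have L_alt c : ~~ odd_perm c -> stabilizes L (c, 1%:M).
  by move=> c_even; apply: L_O3 normal3sub_alt_x1 _ _.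
have StabE := StabXZY_sgn_twist L_overlattice L_Q L_R L_alt L_not_QR.
split.
  exists sgn_twist; split=> [p q [] //|p q|x]; first by rewrite sgn_twistM.
  exact: StabE.
move=> [q h]; split=> [[OE8h q_central]|[/= -> OE8h]].
  split=> //; apply: central_perm3 => p.
  by case: (q_central _ ((StabE _).2 (ex_intro _ p erefl))).
split=> // s /StabE [p ->].
by rewrite /mulG /sgn_twist /= mul1g mulg1 scalar_mxC.
Qed.
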